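(* Let $1/n<\gamma\ll\tau\ll\varepsilon<1$ be constants, let $k\geq 2$ be an integer, and let $G$ be a $d$-regular oriented graph on $n$ vertices with $d\geq(1/4+\varepsilon)n$. Let $\mathcal{P}_k=\{V_{ij}:i,j\in[k]\}$ be a $(k^2,\tau,\gamma)$-partition of $G$. Then for every $i\in[k]$, $$\Big|\bigcup_{j\neq i}V_{ij}\Big|\geq\tau n\quad\text{and}\quad\Big|\bigcup_{j\neq i}V_{ji}\Big|\geq\tau n.$$
   Context: Hierarchy convention: $x\ll y$ means $x\leq f(y)$ for some implicitly given non-decreasing function $f:(0,1]\to(0,1]$; the statement asserts such functions exist, constants chosen from right to left. An oriented graph has at most one edge between any two vertices; $d$-regular means all in- and outdegrees equal $d$. A $k^2$-partition of $V(G)$ is a family $\{V_{ij}:i,j\in[k]\}$ of pairwise disjoint (possibly empty) sets with union $V(G)$; $V_{i*}=\bigcup_j V_{ij}$, $V_{*j}=\bigcup_i V_{ij}$. $E(A,B)$ is the set of edges $ab$ with $a\in A,b\in B$; bad edges $\mathcal{B}_k(\mathcal{P}_k,G)=\bigcup_{i\neq j}E(V_{i*},V_{*j})$. A $(k^2,\tau,\gamma)$-partition is a $k^2$-partition with $|\mathcal{B}_k(\mathcal{P}_k,G)|\leq\gamma n^2$ and $|V_{i*}|,|V_{*j}|\geq\tau n$ for all $i,j\in[k]$. *)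

From HB Require Import structures.
From mathcomp Require Import all_boot all_order all_algebra.
Set Implicit Arguments. Unset Strict Implicit. Unset Printing Implicit Defensive.
Import Order.TTheory GRing.Theory Num.Theory.

Definition oriented (n : nat) (G : rel 'I_n) : Prop :=
  (forall x, ~~ G x x) /\ (forall x y, ~~ (G x y && G y x)).

Definition outdeg (n : nat) (G : rel 'I_n) (v : 'I_n) : nat := #|[set u | G v u]|.
Definition indeg (n : nat) (G : rel 'I_n) (v : 'I_n) : nat := #|[set u | G u v]|.

Definition regular (n : nat) (G : rel 'I_n) (d : nat) : Prop :=
  forall v, outdeg G v = d /\ indeg G v = d.

Definition k2_partition (n k : nat) (V : 'I_k -> 'I_k -> {set 'I_n}) : Prop :=
  (forall i j i' j', (i, j) != (i', j') -> [disjoint V i j & V i' j']) /\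
  (\bigcup_(i < k) \bigcup_(j < k) V i j = [set: 'I_n]).

Definition Vrow (n k : nat) (V : 'I_k -> 'I_k -> {set 'I_n}) (i : 'I_k) : {set 'I_n} :=
  \bigcup_(j < k) V i j.
Definition Vcol (n k : nat) (V : 'I_k -> 'I_k -> {set 'I_n}) (j : 'I_k) : {set 'I_n} :=
  \bigcup_(i < k) V i j.

Definition bad_edges (n k : nat) (V : 'I_k -> 'I_k -> {set 'I_n}) (G : rel 'I_n)
  : {set 'I_n * 'I_n} :=
  [set e | G e.1 e.2 &&
     [exists i : 'I_k, exists j : 'I_k,
        [&& i != j, e.1 \in Vrow V i & e.2 \in Vcol V j]]].

Definition ktg_partition (R : numDomainType) (n k : nat) (tau gam : R)
  (G : rel 'I_n) (V : 'I_k -> 'I_k -> {set 'I_n}) : Prop :=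
  [/\ k2_partition V,
      (#|bad_edges V G|%:R <= gam * (n%:R ^+ 2))%R,
      (forall i, tau * n%:R <= #|Vrow V i|%:R)%R &
      (forall j, tau * n%:R <= #|Vcol V j|%:R)%R].

From HB Require Import structures.
From mathcomp Require Import all_boot all_order all_algebra.
From mathcomp Require Import zify ring lra.
Import Order.TTheory GRing.Theory Num.Theory.
Set Implicit Arguments. Unset Strict Implicit. Unset Printing Implicit Defensive.

(* Write X = V_{i*}, Y = V_{*i}, A = X \ Y = U_{j<>i} V_ij, B = Y \ X = U_{j<>i} V_ji,
   S = X :&: Y and T for the complement of X :|: Y.  Counting the edges leaving X and
   those entering Y, regularity gives d (|B| - |A|) = e(~X, Y) - e(X, ~Y); both counts
   are bad edges, so |A| and |B| differ by O(gamma n), and it suffices to rule out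
   that both are O(tau n).  In that case few edges enter the large column Y from
   outside X, so |X| >= d - O(gamma n / tau); the same holds for a second row
   X' contained in T :|: B, so S and T both have at least n/5 vertices.  As G is
   oriented, S spans at most |S|^2/2 edges, while all but O(tau n^2) of the 2d|S|
   edge ends at S come from edges inside S; hence |S| >= 2d - O(tau n), likewise
   |T| >= 2d - O(tau n), and n >= |S| + |T| >= 4d - O(tau n) > n since
   d >= (1/4 + eps) n and tau << eps. *)

Lemma cards_venn (T : finType) (X Y : {set T}) :
  #|X :\: Y| + #|Y :\: X| + #|X :&: Y| + #|~: (X :|: Y)| = #|T|.
Proof.
have := cardsC (X :|: Y); have := cardsUI X Y.
have := cardsID Y X; have := cardsID X Y; rewrite setIC; lia.
Qed.

Lemma card_disjoint_leq (T : finType) (X Y X' : {set T}) :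
  [disjoint X & X'] -> #|X'| <= #|~: (X :|: Y)| + #|Y :\: X|.
Proof.
move=> XX'_disj; apply: leq_trans (leq_card_setU _ _).1; apply: subset_leq_card.
apply/subsetP => v vX'; move: (disjointFl XX'_disj vX').
by rewrite !inE; case: (v \in X); case: (v \in Y).
Qed.

Section EdgeCount.

Variable n : nat.
Variable G : rel 'I_n.
Implicit Types X Y Z : {set 'I_n}.

Definition nedges (X Y : {set 'I_n}) : nat :=
  \sum_(x : 'I_n) \sum_(y : 'I_n) [&& x \in X, y \in Y & G x y].

Lemma nedgesIDr X Y Z : nedges X Y = nedges X (Y :&: Z) + nedges X (Y :\: Z).
Proof.
rewrite /nedges -big_split; apply: eq_bigr => x _; rewrite -big_split.
apply: eq_bigr => y _; rewrite !inE.
by case: (x \in X); case: (y \in Y); case: (y \in Z); case: (G x y).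
Qed.

Lemma nedgesIDl X Y Z : nedges X Y = nedges (X :&: Z) Y + nedges (X :\: Z) Y.
Proof.
rewrite /nedges -big_split; apply: eq_bigr => x _; rewrite -big_split.
apply: eq_bigr => y _; rewrite !inE.
by case: (x \in X); case: (x \in Z); case: (y \in Y); case: (G x y).
Qed.

Lemma nedgesS (X Y X' Y' : {set 'I_n}) :
  X \subset X' -> Y \subset Y' -> nedges X Y <= nedges X' Y'.
Proof.
move=> /subsetP sXX' /subsetP sYY'; apply: leq_sum => x _; apply: leq_sum => y _.
by case: (boolP (x \in X)) => [/sXX' -> | //]; case: (boolP (y \in Y)) => [/sYY' -> | //].
Qed.

Lemma nedgesUr X (Y1 Y2 : {set 'I_n}) : nedges X (Y1 :|: Y2) <= nedges X Y1 + nedges X Y2.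
Proof.
rewrite /nedges -big_split; apply: leq_sum => x _; rewrite -big_split.
apply: leq_sum => y _; rewrite inE.
by case: (x \in X); case: (y \in Y1); case: (y \in Y2); case: (G x y).
Qed.

Lemma nedgesUl (X1 X2 : {set 'I_n}) Y : nedges (X1 :|: X2) Y <= nedges X1 Y + nedges X2 Y.
Proof.
rewrite /nedges -big_split; apply: leq_sum => x _; rewrite -big_split.
apply: leq_sum => y _; rewrite inE.
by case: (x \in X1); case: (x \in X2); case: (y \in Y); case: (G x y).
Qed.

Lemma card_mul_sum X Y :
  #|X| * #|Y| = \sum_(x : 'I_n) \sum_(y : 'I_n) ((x \in X) && (y \in Y)).
Proof.
rewrite -!sum1_card big_distrl /= big_mkcond; apply: eq_bigr => x _.
case: (x \in X) => /=; last by rewrite big1.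
by rewrite mul1n big_mkcond.
Qed.

Lemma nedges_leq_mul X Y : nedges X Y <= #|X| * #|Y|.
Proof.
rewrite card_mul_sum; apply: leq_sum => x _; apply: leq_sum => y _.
by case: (x \in X); case: (y \in Y); case: (G x y).
Qed.

Lemma nedges_diag X : oriented G -> 2 * nedges X X <= #|X| * #|X|.
Proof.
move=> [_ antisym]; rewrite card_mul_sum mul2n -addnn {2}/nedges exchange_big /=.
rewrite -big_split; apply: leq_sum => x _; rewrite -big_split; apply: leq_sum => y _ /=.
by have := antisym x y; case: (x \in X); case: (y \in X); case: (G x y); case: (G y x).
Qed.

Variable d : nat.
Hypothesis G_regular : regular G d.

Lemma regular_leq_order : 0 < n -> d <= n.
Proof.
move=> n_gt0; have [<- _] := G_regular (Ordinal n_gt0).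
by rewrite -[n in _ <= n]card_ord max_card.
Qed.

Lemma nedgesTr X : nedges X [set: 'I_n] = d * #|X|.
Proof.
rewrite /nedges -sum1_card big_distrr /= [RHS]big_mkcond; apply: eq_bigr => x _.
case: (x \in X) => /=; last by rewrite big1.
rewrite muln1 -(proj1 (G_regular x)) /outdeg -sum1_card [RHS]big_mkcond /=.
by apply: eq_bigr => y _; rewrite !inE.
Qed.

Lemma nedgesTl Y : nedges [set: 'I_n] Y = d * #|Y|.
Proof.
rewrite /nedges exchange_big -sum1_card big_distrr /= [RHS]big_mkcond.
apply: eq_bigr => y _; case: (y \in Y) => /=.
  rewrite muln1 -(proj2 (G_regular y)) /indeg -sum1_card [RHS]big_mkcond /=.
  by apply: eq_bigr => x _; rewrite !inE.
by rewrite big1 // => x _; rewrite andbF.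
Qed.

Lemma nedges_leq_outdeg X Y : nedges X Y <= d * #|X|.
Proof. by rewrite -nedgesTr nedgesS ?subsetT. Qed.

Lemma nedges_leq_indeg X Y : nedges X Y <= d * #|Y|.
Proof. by rewrite -nedgesTl nedgesS ?subsetT. Qed.

Lemma nedges_outE X Y : nedges X Y + nedges X (~: Y) = d * #|X|.
Proof. by rewrite -nedgesTr (nedgesIDr X setT Y) setTI setTD. Qed.

Lemma nedges_inE X Y : nedges X Y + nedges (~: X) Y = d * #|Y|.
Proof. by rewrite -nedgesTl (nedgesIDl setT Y X) setTI setTD. Qed.

Lemma regular_balance X Y : d * #|Y| + nedges X (~: Y) = d * #|X| + nedges (~: X) Y.
Proof. by rewrite -(nedges_outE X Y) -(nedges_inE X Y) addnAC. Qed.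

Lemma regular_row_deficit X Y : d * #|Y| <= #|X| * #|Y| + nedges (~: X) Y.
Proof. by rewrite -(nedges_inE X Y) leq_add2r nedges_leq_mul. Qed.

Hypothesis G_oriented : oriented G.

Lemma regular_double_deg (S : {set 'I_n}) :
  2 * d * #|S| <= #|S| * #|S| + nedges S (~: S) + nedges (~: S) S.
Proof.
have := nedges_diag S G_oriented; have := nedges_outE S S; have := nedges_inE S S.
lia.
Qed.

Lemma regular_double_deg_setI X Y :
  2 * d * #|X :&: Y| <= #|X :&: Y| * #|X :&: Y| + d * (#|X :\: Y| + #|Y :\: X|)
                        + (nedges X (~: Y) + nedges (~: X) Y).
Proof.
set S := X :&: Y.
have out_S : nedges S (~: S) <= d * #|Y :\: X| + nedges X (~: Y).
  have sub : ~: S \subset (Y :\: X) :|: ~: Y.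
    by apply/subsetP => v; rewrite !inE; case: (v \in X); case: (v \in Y).
  apply: leq_trans (nedgesS (subxx S) sub) _; apply: leq_trans (nedgesUr _ _ _) _.
  by apply: leq_add; [exact: nedges_leq_indeg | exact: nedgesS (subsetIl _ _) (subxx _)].
have in_S : nedges (~: S) S <= d * #|X :\: Y| + nedges (~: X) Y.
  have sub : ~: S \subset (X :\: Y) :|: ~: X.
    by apply/subsetP => v; rewrite !inE; case: (v \in X); case: (v \in Y).
  apply: leq_trans (nedgesS sub (subxx S)) _; apply: leq_trans (nedgesUl _ _ _) _.
  by apply: leq_add; [exact: nedges_leq_outdeg | exact: nedgesS (subxx _) (subsetIr _ _)].
have := regular_double_deg S; lia.
Qed.

Lemma regular_double_deg_setCU X Y :
  2 * d * #|~: (X :|: Y)| <= #|~: (X :|: Y)| * #|~: (X :|: Y)|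
                        + d * (#|X :\: Y| + #|Y :\: X|) + (nedges X (~: Y) + nedges (~: X) Y).
Proof.
set T := ~: (X :|: Y).
have T_sub : T \subset ~: X :&: ~: Y by rewrite /T setCU.
have out_T : nedges T (~: T) <= d * #|X :\: Y| + nedges (~: X) Y.
  have sub : ~: T \subset (X :\: Y) :|: Y.
    by apply/subsetP => v; rewrite !inE; case: (v \in X); case: (v \in Y).
  apply: leq_trans (nedgesS (subxx T) sub) _; apply: leq_trans (nedgesUr _ _ _) _.
  apply: leq_add; first exact: nedges_leq_indeg.
  by apply: nedgesS (subxx _); apply: subset_trans T_sub (subsetIl _ _).
have in_T : nedges (~: T) T <= d * #|Y :\: X| + nedges X (~: Y).
  have sub : ~: T \subset (Y :\: X) :|: X.
    by apply/subsetP => v; rewrite !inE; case: (v \in X); case: (v \in Y).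
  apply: leq_trans (nedgesS sub (subxx T)) _; apply: leq_trans (nedgesUl _ _ _) _.
  apply: leq_add; first exact: nedges_leq_outdeg.
  by apply: nedgesS (subxx _) _; apply: subset_trans T_sub (subsetIr _ _).
have := regular_double_deg T; lia.
Qed.

End EdgeCount.

Section Partition.

Variables n k : nat.
Variable V : 'I_k -> 'I_k -> {set 'I_n}.
Hypothesis V_partition : k2_partition V.

Lemma k2_partition_cover x : exists i j, x \in V i j.
Proof.
have : x \in [set: 'I_n] by rewrite inE.
by rewrite -V_partition.2 => /bigcupP [i _ /bigcupP [j _ xV]]; exists i, j.
Qed.

Lemma k2_partition_uniq i j i' j' x : x \in V i j -> x \in V i' j' -> i = i' /\ j = j'.
Proof.
move=> xVij xVij'; case: (eqVneq (i, j) (i', j')) => [[-> ->] // | neq].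
have := V_partition.1 _ _ _ _ neq; rewrite disjoint_subset => /subsetP /(_ x xVij).
by rewrite inE xVij'.
Qed.

Lemma Vrow_disjoint i i' : i != i' -> [disjoint Vrow V i & Vrow V i'].
Proof.
move=> neq; rewrite -setI_eq0; apply/eqP/setP => x; rewrite !inE.
apply/negP => /andP [/bigcupP [j _ xV] /bigcupP [j' _ xV']].
by have [eq_ii' _] := k2_partition_uniq xV xV'; rewrite eq_ii' eqxx in neq.
Qed.

Lemma bigcup_neq_row i : \bigcup_(j < k | j != i) V i j = Vrow V i :\: Vcol V i.
Proof.
apply/setP => x; rewrite inE; apply/bigcupP/andP => [[j neq xV] | [xNC /bigcupP [j _ xV]]].
  split; last by apply/bigcupP; exists j.
  apply/bigcupP => -[i' _ xV']; have [_ eq_ji] := k2_partition_uniq xV xV'.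
  by rewrite eq_ji eqxx in neq.
exists j => //; apply: contraNneq xNC => eq_ji; apply/bigcupP; exists i => //.
by rewrite -[X in V _ X]eq_ji.
Qed.

Lemma bigcup_neq_col i : \bigcup_(j < k | j != i) V j i = Vcol V i :\: Vrow V i.
Proof.
apply/setP => x; rewrite inE; apply/bigcupP/andP => [[j neq xV] | [xNR /bigcupP [j _ xV]]].
  split; last by apply/bigcupP; exists j.
  apply/bigcupP => -[i' _ xV']; have [eq_ji _] := k2_partition_uniq xV xV'.
  by rewrite eq_ji eqxx in neq.
exists j => //; apply: contraNneq xNR => eq_ji; apply/bigcupP; exists i => //.
by rewrite -[X in V X _]eq_ji.
Qed.

Lemma mem_bad_edges (G : rel 'I_n) i j x y :
  G x y -> i != j -> x \in Vrow V i -> y \in Vcol V j -> (x, y) \in bad_edges V G.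
Proof.
move=> Gxy neq xR yC; rewrite inE Gxy; apply/existsP; exists i; apply/existsP; exists j.
by rewrite neq xR yC.
Qed.

Lemma bad_edges_cross (G : rel 'I_n) i :
  nedges G (Vrow V i) (~: Vcol V i) + nedges G (~: Vrow V i) (Vcol V i)
    <= #|bad_edges V G|.
Proof.
have -> : #|bad_edges V G| = \sum_x \sum_y (((x, y) \in bad_edges V G) : nat).
  by rewrite -sum1_card big_mkcond pair_bigA; apply: eq_bigr => -[x y].
rewrite /nedges -big_split; apply: leq_sum => x _; rewrite -big_split; apply: leq_sum => y _.
rewrite !in_setC; case: (boolP (G x y)) => [Gxy | _]; last by rewrite !andbF.
case: (boolP (x \in Vrow V i)) => xR; case: (boolP (y \in Vcol V i)) => yC //=.
- have [i' [j' yV]] := k2_partition_cover y.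
  have yC' : y \in Vcol V j' by apply/bigcupP; exists i'.
  have neq : i != j' by apply: contraNneq yC => ->.
  by rewrite (mem_bad_edges Gxy neq xR yC').
- have [i' [j' xV]] := k2_partition_cover x.
  have xR' : x \in Vrow V i' by apply/bigcupP; exists j'.
  have neq : i' != i by apply: contraNneq xR => <-.
  by rewrite (mem_bad_edges Gxy neq xR' yC).
Qed.

End Partition.

Lemma exists_ord_neq k (i : 'I_k) : 1 < k -> exists j : 'I_k, i != j.
Proof.
move=> k_gt1; have : 0 < #|[set~ i]| by rewrite cardsC1 card_ord -subn1 subn_gt0.
by case/card_gt0P => j; rewrite in_setC1 eq_sym; exists j.
Qed.

Local Open Scope ring_scope.

Lemma ler_of_mulr_lb (R : realDomainType) (x y c c0 : R) :
  0 <= y -> 0 < c0 -> c0 <= c -> x * c <= y * c0 -> x <= y.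
Proof.
move=> y_ge0 c0_gt0 c0_le_c xc_le; have [x_le0 | x_gt0] := lerP x 0.
  exact: le_trans x_le0 y_ge0.
by rewrite -(ler_pM2r c0_gt0); apply: le_trans _ xc_le; rewrite ler_pM2l.
Qed.

(* a, b, s, t stand for |X :\: Y|, |Y :\: X|, |X :&: Y|, |~: (X :|: Y)|, y and z for
   e(X, ~: Y) and e(~: X, Y), and m for tau * n. *)
Lemma cross_parts_arith (R : realFieldType) (n d m a b s t y z : R) :
  0 < m -> n / 4 + 100 * m <= d -> d <= n ->
  0 <= a -> 0 <= b -> 0 <= s -> 0 <= t -> 0 <= y -> 0 <= z ->
  a + b + s + t = n ->
  d * (s + b) + y = d * (s + a) + z ->
  y + z <= m ^+ 2 / 100 ->
  d - m / 100 <= s + a -> d - m / 100 <= t + b ->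
  2 * d * s <= s * s + d * (a + b) + (y + z) ->
  2 * d * t <= t * t + d * (a + b) + (y + z) ->
  m <= a /\ m <= b.
Proof.
move=> m_gt0 d_ge d_le a_ge0 b_ge0 s_ge0 t_ge0 y_ge0 z_ge0 sum_n balance yz_le
  row_le row'_le deg_s deg_t.
have m_le_n : m <= n / 100 by clear -m_gt0 d_ge d_le; lra.
have mn_ge0 : 0 <= m * n by apply: mulr_ge0; lra.
have yz_small : y + z <= m * n / 10000.
  have : m * m <= m * (n / 100) by apply: ler_wpM2l; lra.
  by rewrite expr2 in yz_le; clear -yz_le; lra.
have [ba_le ab_le] : b - a <= m / 2500 /\ a - b <= m / 2500.
  by split; apply: (ler_of_mulr_lb (c := d) (c0 := n / 4));
    clear -m_gt0 m_le_n d_ge balance y_ge0 z_ge0 yz_small; lra.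
suff ab_large : ~ (a + b < 4 * m).
  by split; rewrite leNgt; apply/negP => small; apply: ab_large;
    clear -small ab_le ba_le m_gt0 a_ge0 b_ge0; lra.
move=> ab_small.
have err_le : d * (a + b) + (y + z) <= 25 * m * (n / 5).
  have : d * (a + b) <= n * (4 * m).
    by apply: ler_pM; clear -d_ge d_le m_le_n m_gt0 a_ge0 b_ge0 ab_small; lra.
  by clear -yz_small mn_ge0; lra.
have s_ge : 2 * d - s <= 25 * m.
  apply: (ler_of_mulr_lb (c := s) (c0 := n / 5)); try by clear -m_gt0 m_le_n; lra.
  - by clear -row_le d_ge ab_small b_ge0 m_gt0 m_le_n; lra.
  - by clear -deg_s err_le; lra.
have t_ge : 2 * d - t <= 25 * m.
  apply: (ler_of_mulr_lb (c := t) (c0 := n / 5)); try by clear -m_gt0 m_le_n; lra.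
  - by clear -row'_le d_ge ab_small a_ge0 m_gt0 m_le_n; lra.
  - by clear -deg_t err_le; lra.
by clear -s_ge t_ge sum_n a_ge0 b_ge0 d_ge m_gt0; lra.
Qed.

Section RegularCross.

Variable R : realFieldType.
Variables (n d : nat) (G : rel 'I_n).
Hypothesis G_regular : regular G d.

Lemma regular_row_large (X Y : {set 'I_n}) (m c : R) :
  0 < m -> m <= #|Y|%:R -> (nedges G (~: X) Y)%:R <= c * m -> d%:R - c <= #|X|%:R.
Proof.
move=> m_gt0 m_le_Y in_le; rewrite lerBlDr addrC -lerBlDr.
have c_ge0 : 0 <= c by rewrite -(pmulr_lge0 _ m_gt0); apply: le_trans in_le.
apply: (ler_of_mulr_lb c_ge0 m_gt0 m_le_Y).
move: (regular_row_deficit G_regular X Y); rewrite -(ler_nat R) natrD !natrM.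
move=> deficit; rewrite mulrBl lerBlDr; apply: le_trans deficit _.
by rewrite addrC lerD2r.
Qed.

Hypothesis G_oriented : oriented G.

Lemma regular_cross_large (tau g : R) (X Y X' Y' : {set 'I_n}) :
  0 < tau -> g <= tau ^+ 2 / 100 ->
  n%:R / 4 + 100 * (tau * n%:R) <= d%:R ->
  [disjoint X & X'] ->
  tau * n%:R <= #|Y|%:R -> tau * n%:R <= #|Y'|%:R ->
  (nedges G X (~: Y) + nedges G (~: X) Y)%:R <= g * n%:R ^+ 2 ->
  (nedges G (~: X') Y')%:R <= g * n%:R ^+ 2 ->
  tau * n%:R <= #|X :\: Y|%:R /\ tau * n%:R <= #|Y :\: X|%:R.
Proof.
move=> tau_gt0 g_le d_ge XX'_disj m_le_Y m_le_Y' bad_le bad'_le.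
have [n0 | n_gt0] := posnP n.
  have -> : n%:R = 0 :> R by rewrite n0.
  by rewrite mulr0 !ler0n.
set m := tau * n%:R in d_ge m_le_Y m_le_Y' *.
have m_gt0 : 0 < m by rewrite mulr_gt0 ?ltr0n.
have bad_small e : e%:R <= g * n%:R ^+ 2 -> e%:R <= m / 100 * m.
  move=> /le_trans; apply.
  have -> : m / 100 * m = tau ^+ 2 / 100 * n%:R ^+ 2 by rewrite /m; ring.
  by rewrite ler_wpM2r ?sqr_ge0.
have X_card : #|X| = (#|X :&: Y| + #|X :\: Y|)%N by rewrite cardsID.
have Y_card : #|Y| = (#|X :&: Y| + #|Y :\: X|)%N by rewrite setIC cardsID.
have row : d%:R - m / 100 <= #|X :&: Y|%:R + #|X :\: Y|%:R.
  rewrite -natrD -X_card; apply: regular_row_large m_gt0 m_le_Y (bad_small _ _).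
  by apply: le_trans bad_le; rewrite ler_nat leq_addl.
have row' : d%:R - m / 100 <= #|~: (X :|: Y)|%:R + #|Y :\: X|%:R.
  apply: le_trans (regular_row_large m_gt0 m_le_Y' (bad_small _ bad'_le)) _.
  by rewrite -natrD ler_nat card_disjoint_leq.
have := cards_venn X Y; rewrite card_ord => /(congr1 (fun k => k%:R : R)).
rewrite !natrD => parts_sum.
have := regular_balance G_regular X Y.
rewrite X_card Y_card => /(congr1 (fun k => k%:R : R)); rewrite !(natrD, natrM) => balance.
have := regular_double_deg_setI G_regular G_oriented X Y.
rewrite -(ler_nat R) !(natrD, natrM) => deg_s.
have := regular_double_deg_setCU G_regular G_oriented X Y.
rewrite -(ler_nat R) !(natrD, natrM) => deg_t.
apply: (cross_parts_arith m_gt0 d_ge _ _ _ _ _ _ _ parts_sum balance _ row row' deg_s deg_t);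
  rewrite ?ler0n //.
- by rewrite ler_nat (regular_leq_order G_regular).
- by rewrite -natrD expr2 mulrAC bad_small.
Qed.

End RegularCross.

Theorem proposition3p11 (R : realFieldType) :
  forall eps : R, 0 < eps < 1 ->
  exists tau0 : R, 0 < tau0 /\ forall tau : R, 0 < tau <= tau0 ->
  exists gam0 : R, 0 < gam0 /\ forall gam : R, 0 < gam <= gam0 ->
  forall (n k d : nat) (G : rel 'I_n) (V : 'I_k -> 'I_k -> {set 'I_n}),
    1 / n%:R < gam ->
    (2 <= k)%N ->
    oriented G ->
    regular G d ->
    (1 / 4 + eps) * n%:R <= d%:R ->
    ktg_partition tau gam G V ->
    forall i : 'I_k,
      tau * n%:R <= #|\bigcup_(j < k | j != i) V i j|%:R /\
      tau * n%:R <= #|\bigcup_(j < k | j != i) V j i|%:R.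
Proof.
move=> eps /andP [eps_gt0 eps_lt1]; exists (eps / 100); split; first by rewrite divr_gt0.
move=> tau /andP [tau_gt0 tau_le]; exists (tau ^+ 2 / 100).
split; first by rewrite divr_gt0 ?exprn_gt0.
move=> g /andP [_ g_le] n k d G V _ k_ge2 G_oriented G_regular d_ge [V_part bad_le _ col_ge] i.
have [i' neq_ii'] := exists_ord_neq i k_ge2.
rewrite (bigcup_neq_row V_part) (bigcup_neq_col V_part).
have cross_le j : (nedges G (Vrow V j) (~: Vcol V j) + nedges G (~: Vrow V j) (Vcol V j))%:R
                    <= g * n%:R ^+ 2.
  by apply: le_trans bad_le; rewrite ler_nat bad_edges_cross.
apply: (regular_cross_large G_regular G_oriented tau_gt0 g_le _ (Vrow_disjoint V_part neq_ii')
          (col_ge i) (col_ge i') (cross_le i)).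
- have : 100 * tau * n%:R <= eps * n%:R by apply: ler_wpM2r; [exact: ler0n | lra].
  lra.
- by apply: le_trans (cross_le i'); rewrite ler_nat leq_addl.
Qed.
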